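(* Let $H$ be a graph with minimum degree $\delta(H)>|V(H)|/2$. Then for every graph $G$, \[ \kappa'(G\times H)=\min\{\,2\kappa'(G)\,e(H),\ \delta(G)\delta(H)\,\}. \]
   Context: All graphs are finite, simple and undirected. $\kappa'(G)$ denotes the edge connectivity of $G$, the minimum number of edges whose removal disconnects $G$; it is $0$ if $G$ is disconnected or has only one vertex. $\delta(\cdot)$ denotes minimum degree and $e(H)=|E(H)|$. The direct product $G\times H$ has vertex set $V(G)\times V(H)$. Two vertices $(x,u),(y,v)$ are adjacent if and only if $xy\in E(G)$ and $uv\in E(H)$. *)

From mathcomp Require Import all_boot.
Set Implicit Arguments. Unset Strict Implicit. Unset Printing Implicit Defensive.

Record sgraph := SGraph {
  svert :> finType;
  sadj : rel svert;
  sadj_sym : symmetric sadj;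
  sadj_irr : irreflexive sadj }.

Definition edges (G : sgraph) : {set {set G}} :=
  [set E : {set G} | [exists x, exists y, sadj x y && (E == [set x; y])]].

Definition nedges (G : sgraph) : nat := #|edges G|.

Definition deg (G : sgraph) (x : G) : nat := #|[set y | sadj x y]|.

(* minimum degree; graphs considered are nonempty where it matters (0 for empty) *)
Definition mindeg (G : sgraph) : nat :=
  if [pick x : G] is Some x0 then \big[minn/deg x0]_(x : G) deg x else 0.

Definition del_adj (G : sgraph) (F : {set {set G}}) : rel G :=
  fun x y => sadj x y && ([set x; y] \notin F).

Definition connectedb (V : finType) (r : rel V) : bool :=
  [forall x, forall y, connect r x y].

(* edge connectivity: 0 if |V| <= 1 or disconnected, otherwise the minimum
   number of edges whose removal disconnects G *)
Definition edge_conn (G : sgraph) : nat :=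
  if #|G| <= 1 then 0 else
  \big[minn/nedges G]_(F : {set {set G}} |
       (F \subset edges G) && ~~ connectedb (del_adj F)) #|F|.

Definition dprod_adj (G H : sgraph) : rel (G * H)%type :=
  fun p q => sadj p.1 q.1 && sadj p.2 q.2.

Lemma dprod_adj_sym (G H : sgraph) : symmetric (@dprod_adj G H).
Proof. by move=> [a b] [c d]; rewrite /dprod_adj /= (sadj_sym a) (sadj_sym b). Qed.

Lemma dprod_adj_irr (G H : sgraph) : irreflexive (@dprod_adj G H).
Proof. by move=> [a b]; rewrite /dprod_adj /= sadj_irr. Qed.

Definition dprod_graph (G H : sgraph) : sgraph :=
  @SGraph (G * H)%type (@dprod_adj G H) (@dprod_adj_sym G H) (@dprod_adj_irr G H).

From mathcomp Require Import all_boot zify.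
Set Implicit Arguments. Unset Strict Implicit. Unset Printing Implicit Defensive.

(* The edge connectivity of a graph is the least number of edges leaving a
   nonempty proper vertex set Z.  In G x H the neighbourhood of a vertex and the
   cylinders X x H (whose cut is 2 e(H) times the cut of X in G) give the upper
   bounds.  Conversely, let Z be a nonempty proper vertex set of G x H.  If every
   fibre Z_x = {u | (x,u) in Z} is empty or all of H, then Z is a cylinder.
   Otherwise some fibre Z_x is a nonempty proper subset of H; for each neighbour
   y of x, the edges of G x H over xy leaving Z correspond to the pairs
   (u in Z_x, v notin Z_y) and (v in Z_y, u notin Z_x) of adjacent vertices of H,
   and because delta(H) > |V(H)|/2 there are at least delta(H) of them.  Summing
   over the neighbours of x gives delta(G) delta(H). *)

Lemma card_set_predE (T : finType) (P : pred T) : #|[set x | P x]| = \sum_x P x.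
Proof. by rewrite -sum1dep_card big_mkcond; apply: eq_bigr => x _; case: (P x). Qed.

Lemma sum_pairE (I J : finType) (F : I * J -> nat) : \sum_p F p = \sum_i \sum_j F (i, j).
Proof. by rewrite pair_bigA; apply: eq_bigr => -[]. Qed.

Lemma exists_notin_setT (T : finType) (A : {set T}) : A != setT -> exists x, x \notin A.
Proof. by rewrite -properT => /properP[_ [x _ xA]]; exists x. Qed.

Lemma bigmin_seq_leq (I : eqType) (s : seq I) (P : pred I) (F : I -> nat) x0 j :
  j \in s -> P j -> \big[minn/x0]_(i <- s | P i) F i <= F j.
Proof.
elim: s => // a s IHs; rewrite inE big_cons => /predU1P[<- ->|js Pj]; first exact: geq_minl.
by case: (P a); [apply: leq_trans (geq_minr _ _) _|]; apply: IHs.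
Qed.

Lemma bigmin_leq (I : finType) (P : pred I) (F : I -> nat) x0 j :
  P j -> \big[minn/x0]_(i | P i) F i <= F j.
Proof. exact: bigmin_seq_leq (mem_index_enum j). Qed.

Lemma leq_bigmin (I : finType) (P : pred I) (F : I -> nat) x0 m :
  m <= x0 -> (forall i, P i -> m <= F i) -> m <= \big[minn/x0]_(i | P i) F i.
Proof. by move=> m0 mF; elim/big_ind: _ => // a b ma mb; rewrite leq_min ma. Qed.

Lemma bigmin_attained (I : finType) (P : pred I) (F : I -> nat) x0 :
  \big[minn/x0]_(i | P i) F i = x0 \/ exists2 j, P j & \big[minn/x0]_(i | P i) F i = F j.
Proof.
elim/big_ind: _ => [|a b Pa Pb|j Pj]; [by left | | by right; exists j].
by case: leqP.
Qed.

Lemma leq_add_of_cross_bounds d p q a b :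
  0 < p -> q < d -> p * d <= p * q + a -> q * d <= q * p + b -> d <= a + b.
Proof. move=> p_gt0 qd h1 h2; case: (leqP d p) => pd; nia. Qed.

Lemma sum_row_col_leq (I : finType) (T : I -> I -> nat) x :
  T x x = 0 -> \sum_y (T x y + T y x) <= \sum_y \sum_z T y z.
Proof.
move=> Txx; rewrite big_split /= [X in _ + X <= _](bigD1 x) //= Txx add0n.
rewrite [X in _ <= X](bigD1 x) //= leq_add2l; apply: leq_sum => y _.
by rewrite (bigD1 x) //= leq_addr.
Qed.

Section EdgeCuts.
Variable K : sgraph.
Implicit Types P Q Z : {set K}.

Definition cross P Q : nat := \sum_u \sum_v (sadj u v && (u \in P) && (v \notin Q)).

Definition cut_darts Z : {set K * K} :=
  [set p | sadj p.1 p.2 && (p.1 \in Z) && (p.2 \notin Z)].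

Definition boundary Z : {set {set K}} := [set [set p.1; p.2] | p in cut_darts Z].

Lemma card_boundary Z : #|boundary Z| = cross Z Z.
Proof.
rewrite card_in_imset; first by rewrite card_set_predE /cross pair_bigA.
move=> [a b] [c d]; rewrite !inE /= => /andP[/andP[_ aZ] bZ] /andP[/andP[_ cZ] dZ] E.
have /set2P[ac|ad] : a \in [set c; d] by rewrite -E set21.
  have /set2P[bc|->] : b \in [set c; d] by rewrite -E set22.
    by rewrite bc cZ in bZ.
  by rewrite ac.
by rewrite ad (negbTE dZ) in aZ.
Qed.

Lemma boundary_subset Z : boundary Z \subset edges K.
Proof.
apply/subsetP => e /imsetP[[a b]]; rewrite inE /= => /andP[/andP[ab _] _] ->.
by rewrite inE; apply/existsP; exists a; apply/existsP; exists b; rewrite ab eqxx.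
Qed.

Lemma boundary_disconnects Z x y :
  x \in Z -> y \notin Z -> ~~ connect (del_adj (boundary Z)) x y.
Proof.
move=> xZ yZ; apply: contra yZ => /(closed_connect _) <- //.
move=> u v /andP[uv not_bd]; apply/idP/idP => [uZ|vZ]; apply: contraNT not_bd => nZ.
  by apply/imsetP; exists (u, v); rewrite // inE /= uv uZ.
apply/imsetP; exists (v, u); last by rewrite /= setUC.
by rewrite inE /= sadj_sym uv vZ.
Qed.

Lemma card_gt1_of_proper Z : Z != set0 -> Z != setT -> 1 < #|K|.
Proof.
case/set0Pn => a aZ /exists_notin_setT[b bZ]; apply/card_gt1P; exists a, b.
by split=> //; apply: contraNneq bZ => <-.
Qed.

Lemma edge_conn_card_le1 : #|K| <= 1 -> edge_conn K = 0.
Proof. by rewrite /edge_conn => ->. Qed.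

Lemma edge_conn_le_cross Z : Z != set0 -> Z != setT -> edge_conn K <= cross Z Z.
Proof.
move=> Z0 ZT; rewrite /edge_conn ifN -?ltnNge ?(card_gt1_of_proper Z0 ZT) //.
rewrite -card_boundary; apply: bigmin_leq; rewrite boundary_subset /=.
case/set0Pn: Z0 => x xZ; case/exists_notin_setT: ZT => y yZ.
by apply: contraNN (boundary_disconnects xZ yZ) => /forallP/(_ x)/forallP/(_ y).
Qed.

Lemma edge_conn_ge m : 1 < #|K| ->
  (forall Z, Z != set0 -> Z != setT -> m <= cross Z Z) -> m <= edge_conn K.
Proof.
move=> K2 m_le; rewrite /edge_conn ifN -?ltnNge //; apply: leq_bigmin.
  case/card_gt1P: K2 => a [b [_ _ ab]].
  have a0 : [set a] != set0 by apply/set0Pn; exists a; rewrite inE.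
  have aT : [set a] != setT.
    by apply/eqP => /setP/(_ b); rewrite !inE eq_sym (negbTE ab).
  apply: leq_trans (m_le _ a0 aT) _; rewrite -card_boundary.
  exact: subset_leq_card (boundary_subset _).
move=> F /andP[F_sub /forallPn[x /forallPn[y xy]]].
pose Z := [set z | connect (del_adj F) x z].
have Z0 : Z != set0 by apply/set0Pn; exists x; rewrite inE connect0.
have ZT : Z != setT by apply/eqP => /setP/(_ y); rewrite !inE (negbTE xy).
apply: leq_trans (m_le _ Z0 ZT) _; rewrite -card_boundary; apply: subset_leq_card.
apply/subsetP => e /imsetP[[a b]]; rewrite !inE /= => /andP[/andP[ab xa] xb] ->.
apply: contraNT xb => bdF; apply: connect_trans xa (connect1 _).
by rewrite /del_adj ab bdF.
Qed.

Lemma exists_cross_le_edge_conn : 1 < #|K| ->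
  exists Z, [/\ Z != set0, Z != setT & cross Z Z <= edge_conn K].
Proof.
move=> K2.
case: (boolP [exists Z, [&& Z != set0, Z != setT & cross Z Z <= edge_conn K]]).
  by case/existsP=> Z /and3P[Z0 ZT cZ]; exists Z.
move/existsPn=> none; suff : edge_conn K < edge_conn K by rewrite ltnn.
by apply: edge_conn_ge K2 _ => Z Z0 ZT; have := none Z; rewrite Z0 ZT ltnNge.
Qed.

Lemma mindeg_le_deg (x : K) : mindeg K <= deg x.
Proof. by rewrite /mindeg; case: pickP => [x0 _|//]; apply: bigmin_leq. Qed.

Lemma mindeg_attained (x : K) : exists y : K, mindeg K = deg y.
Proof.
rewrite /mindeg; case: pickP => [x0 _|/(_ x)//].
by case: (bigmin_attained xpredT (@deg K) (deg x0)) => [|[y _]] ->; eexists.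
Qed.

Lemma mindeg_card_le1 : #|K| <= 1 -> mindeg K = 0.
Proof.
move/card_le1_eqP=> K1; rewrite /mindeg; case: pickP => // x _.
apply/eqP; rewrite -leqn0; apply: leq_trans (@bigmin_leq _ _ _ _ x _) _ => //.
rewrite leqn0 cards_eq0; apply/eqP/setP => y; rewrite !inE.
by rewrite (K1 y x) ?inE ?sadj_irr.
Qed.

Lemma card_gt1_of_mindeg_gt0 : 0 < mindeg K -> 1 < #|K|.
Proof. by move=> dK; rewrite ltnNge; apply: contraTN dK => /mindeg_card_le1 ->. Qed.

Lemma set2_eq_pair (a b x y : K) : a != b ->
  ([set a; b] == [set x; y]) = ((a, b) == (x, y)) || ((a, b) == (y, x)).
Proof.
move=> ab; apply/eqP/orP => [E|[]/eqP[-> ->] //]; last exact: setUC.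
have /set2P[ax|ay] : a \in [set x; y] by rewrite -E set21.
  have /set2P[bx|->] : b \in [set x; y] by rewrite -E set22.
    by rewrite ax bx eqxx in ab.
  by rewrite ax; left.
have /set2P[->|by'] : b \in [set x; y] by rewrite -E set22.
  by rewrite ay; right.
by rewrite ay by' eqxx in ab.
Qed.

Lemma double_nedges : 2 * nedges K = \sum_(u : K) \sum_(v : K) sadj u v.
Proof.
set D := [set p : K * K | sadj p.1 p.2].
rewrite pair_bigA -(card_set_predE (fun p : K * K => sadj p.1 p.2)) -/D -sum1_card.
rewrite (partition_big_imset (fun p : K * K => [set p.1; p.2])).
have -> : [set [set p.1; p.2] | p in D] = edges K.
  apply/setP => e; apply/imsetP/idP => [[[x y]]|].
    rewrite /D !inE /= => xy ->.
    by apply/existsP; exists x; apply/existsP; exists y; rewrite xy eqxx.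
  by rewrite inE => /existsP[x /existsP[y /andP[xy /eqP->]]]; exists (x, y); rewrite ?inE.
rewrite mulnC -sum_nat_const; apply: eq_bigr => e.
rewrite inE => /existsP[x /existsP[y /andP[xy /eqP->]]].
have xny : x != y by apply: contraTneq xy => ->; rewrite sadj_irr.
rewrite sum1dep_card.
have -> : [set p | (p \in D) && ([set p.1; p.2] == [set x; y])] = [set (x, y); (y, x)].
  apply/setP => -[a b]; rewrite !inE /=; case ab: (sadj a b) => /=.
    by rewrite set2_eq_pair //; apply: contraTneq ab => ->; rewrite sadj_irr.
  by apply/esym/negbTE/norP; split; apply: contraFneq ab => -[-> ->] //; rewrite sadj_sym.
by rewrite cards2 xpair_eqE (negbTE xny).
Qed.

Lemma cross_nbrsE P Q : cross P Q = \sum_(u in P) #|[set v | sadj u v] :\: Q|.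
Proof.
rewrite /cross [RHS]big_mkcond; apply: eq_bigr => u _.
case: (u \in P); last by apply: big1 => v _; rewrite andbF.
by rewrite -card_set_predE; apply: eq_card => v; rewrite !inE andbT andbC.
Qed.

Lemma cross_set1 z : cross [set z] [set z] = deg z.
Proof.
rewrite cross_nbrsE big_set1; apply: eq_card => v; rewrite !inE.
by case: eqP => [->|]; rewrite ?sadj_irr ?andbF.
Qed.

Lemma crossCC P Q : cross (~: P) (~: Q) = cross Q P.
Proof.
rewrite /cross exchange_big; apply: eq_bigr => v _; apply: eq_bigr => u _.
by rewrite !inE negbK sadj_sym andbAC.
Qed.

Lemma card_mul_mindeg_le P Q : #|P| * mindeg K <= #|P| * #|Q| + cross P Q.
Proof.
rewrite cross_nbrsE -!sum_nat_const -big_split /=; apply: leq_sum => u _.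
apply: leq_trans (mindeg_le_deg u) _.
by rewrite /deg -(cardsID Q) leq_add2r subset_leq_card ?subsetIr.
Qed.

(* Since |Q| + |~: Q| = |K| < 2 delta(K), one of Q, ~: Q has fewer than delta(K)
   vertices; apply [card_mul_mindeg_le] to it and to P (resp. ~: P). *)
Lemma mindeg_le_cross_add P Q : #|K| < 2 * mindeg K ->
  P != set0 -> P != setT -> mindeg K <= cross P Q + cross Q P.
Proof.
move=> Kd P0 PT.
have P_gt0 : 0 < #|P| by rewrite card_gt0.
have CP_gt0 : 0 < #|~: P|.
  by case/exists_notin_setT: PT => w wP; apply/card_gt0P; exists w; rewrite inE.
have [Qd|dQ] := ltnP #|Q| (mindeg K).
  by apply: leq_add_of_cross_bounds P_gt0 Qd _ _; apply: card_mul_mindeg_le.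
have CQd : #|~: Q| < mindeg K by move: Kd; rewrite -(cardsC Q); lia.
rewrite addnC; apply: leq_add_of_cross_bounds CP_gt0 CQd _ _.
  by rewrite -(crossCC P Q) card_mul_mindeg_le.
by rewrite -(crossCC Q P) card_mul_mindeg_le.
Qed.

End EdgeCuts.

Section DirectProduct.
Variables G H : sgraph.
Local Notation GH := (dprod_graph G H).
Implicit Types (X : {set G}) (Z : {set GH}).

Definition fiber Z (x : G) : {set H} := [set u | (x, u) \in Z].

Definition cylinder X : {set GH} := [set p | p.1 \in X].

Lemma cross_dprod Z :
  cross Z Z = \sum_(x : G) \sum_(y : G) sadj x y * cross (fiber Z x) (fiber Z y).
Proof.
rewrite /cross sum_pairE; apply: eq_bigr => x _.
under eq_bigr => u _ do rewrite sum_pairE.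
rewrite exchange_big; apply: eq_bigr => y _; rewrite big_distrr.
apply: eq_bigr => u _; rewrite big_distrr; apply: eq_bigr => v _.
rewrite /fiber !inE /= /dprod_adj /=.
by case: (sadj x y); rewrite ?mul1n ?mul0n.
Qed.

Lemma cross_cylinder X : cross (cylinder X) (cylinder X) = cross X X * (2 * nedges H).
Proof.
rewrite cross_dprod double_nedges /cross big_distrl; apply: eq_bigr => x _.
rewrite big_distrl; apply: eq_bigr => y _; rewrite !big_distrr; apply: eq_bigr => u _.
rewrite !big_distrr; apply: eq_bigr => v _; rewrite /fiber !inE /=.
by case: (sadj x y); case: (sadj u v); case: (x \in X); case: (y \in X).
Qed.

Lemma cylinder_fibers Z :
  (forall x, (fiber Z x == set0) || (fiber Z x == setT)) ->
  Z = cylinder [set x | fiber Z x == setT].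
Proof.
move=> triv; apply/setP => -[x u]; rewrite !inE /=.
have uZx : ((x, u) \in Z) = (u \in fiber Z x) by rewrite inE.
case/orP: (triv x) => /eqP Zx; rewrite uZx Zx inE ?eqxx //.
by apply/esym/eqP => /setP/(_ u); rewrite !inE.
Qed.

Lemma deg_dprod (x : G) (u : H) : deg ((x, u) : GH) = deg x * deg u.
Proof. by rewrite /deg -cardsX; apply: eq_card => -[y v]; rewrite !inE. Qed.

Lemma edge_conn_dprod_le_deg (x : G) (u : H) : 0 < deg u -> edge_conn GH <= deg x * deg u.
Proof.
rewrite card_gt0 => /set0Pn[v]; rewrite inE => uv.
rewrite -deg_dprod -cross_set1; apply: edge_conn_le_cross.
  by apply/set0Pn; exists (x, u); rewrite inE.
apply/eqP => /setP/(_ (x, v)); rewrite !inE xpair_eqE eqxx /= => /eqP vu.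
by rewrite vu sadj_irr in uv.
Qed.

Lemma edge_conn_dprod_le_mindeg : 0 < mindeg H -> edge_conn GH <= mindeg G * mindeg H.
Proof.
move=> dH; case: (posnP #|G|) => [G0|/card_gt0P[x0 _]].
  by rewrite edge_conn_card_le1 // card_prod G0.
case/card_gt1P: (card_gt1_of_mindeg_gt0 dH) => u0 _.
have [x ->] := mindeg_attained x0; have [u du] := mindeg_attained u0.
by rewrite du in dH *; apply: edge_conn_dprod_le_deg.
Qed.

Lemma edge_conn_dprod_le_cylinder : 1 < #|G| -> 0 < #|H| ->
  edge_conn GH <= 2 * edge_conn G * nedges H.
Proof.
move=> G2 /card_gt0P[u0 _]; have [X [X0 XT cX]] := exists_cross_le_edge_conn G2.
apply: leq_trans (@edge_conn_le_cross _ (cylinder X) _ _) _.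
- by case/set0Pn: X0 => x xX; apply/set0Pn; exists (x, u0); rewrite inE.
- case/exists_notin_setT: XT => y yX.
  by apply/eqP => /setP/(_ (y, u0)); rewrite !inE (negbTE yX).
by rewrite cross_cylinder mulnCA mulnA leq_mul2r leq_mul2l cX !orbT.
Qed.

Lemma mindeg_mul_le_cross_dprod Z (x : G) : #|H| < 2 * mindeg H ->
  fiber Z x != set0 -> fiber Z x != setT -> mindeg G * mindeg H <= cross Z Z.
Proof.
move=> Hd Zx0 ZxT; rewrite cross_dprod.
pose T y z := sadj y z * cross (fiber Z y) (fiber Z z).
apply: leq_trans (@sum_row_col_leq _ T x _); last by rewrite /T sadj_irr.
apply: leq_trans (leq_mul (mindeg_le_deg x) (leqnn (mindeg H))) _.
rewrite /deg card_set_predE big_distrl /=; apply: leq_sum => y _.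
by rewrite /T (sadj_sym y x) -mulnDr leq_mul2l mindeg_le_cross_add ?orbT.
Qed.

Lemma min_le_cross_dprod Z : #|H| < 2 * mindeg H -> Z != set0 -> Z != setT ->
  minn (2 * edge_conn G * nedges H) (mindeg G * mindeg H) <= cross Z Z.
Proof.
move=> Hd Z0 ZT.
case: (boolP [exists x, (fiber Z x != set0) && (fiber Z x != setT)]).
  case/existsP=> x /andP[Zx0 ZxT].
  exact: leq_trans (geq_minr _ _) (mindeg_mul_le_cross_dprod Hd Zx0 ZxT).
move/existsPn=> triv; apply: leq_trans (geq_minl _ _) _.
set X := [set x | fiber Z x == setT].
have ZX : Z = cylinder X.
  by apply: cylinder_fibers => x; have := triv x; rewrite negb_and !negbK.
have X0 : X != set0.
  by apply: contraNneq Z0 => X0; rewrite ZX X0; apply/eqP/setP => p; rewrite !inE.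
have XT : X != setT.
  by apply: contraNneq ZT => XT; rewrite ZX XT; apply/eqP/setP => p; rewrite !inE.
by rewrite ZX cross_cylinder mulnCA mulnA leq_mul2r leq_mul2l edge_conn_le_cross ?orbT.
Qed.

End DirectProduct.

Theorem theorem1 (H : sgraph) (hH : #|H| < 2 * mindeg H) (G : sgraph) :
  edge_conn (dprod_graph G H) = minn (2 * edge_conn G * nedges H) (mindeg G * mindeg H).
Proof.
have dH : 0 < mindeg H by rewrite lt0n; apply: contraTneq hH => ->.
have H2 := card_gt1_of_mindeg_gt0 dH.
apply/eqP; rewrite eqn_leq leq_min edge_conn_dprod_le_mindeg // andbT.
have [G1|G2] := leqP #|G| 1.
  have := edge_conn_dprod_le_mindeg G dH.
  by rewrite (mindeg_card_le1 G1) (edge_conn_card_le1 G1) !mul0n => ->.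
rewrite edge_conn_dprod_le_cylinder ?(ltnW H2) //=.
apply: edge_conn_ge => [|Z]; first by rewrite card_prod; nia.
exact: min_le_cross_dprod.
Qed.
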